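(* Fix positive integers $\ell,m$. Let $F\subset\mathbb{R}[x]$ be an infinite set of polynomials. Suppose each $f\in F$ is a sum of $\ell$ squares of polynomials each having at most $m$ monomial terms, and that all nonzero coefficients of all $f\in F$ belong to a fixed finite set $C\subset\mathbb{R}$. Then there exist infinitely many distinct $f_1,f_2,\ldots\in F$, matrices $P_1,P_2,\ldots\in\mathbb{N}^{\ell\times m}$, and a single family of real numbers $(\bar a_{ij})$ such that for all $k$, $$f_k=S_{P_k}(x)\big|_{a_{ij}=\bar a_{ij}}.$$
   Context: For $P=(p_{ij})\in\mathbb{N}^{\ell\times m}$ and indeterminates $a_{ij}$, define $$S_P(x):=\sum_{i=1}^\ell\Big(\sum_{j=1}^m a_{ij}x^{p_{ij}}\Big)^2\in\mathbb{N}[a_{ij}][x].$$ The exponent matrices may be taken ordered so that $p_{11}\ge p_{21}\ge\cdots\ge p_{\ell1}$ and $p_{ij}>p_{i(j+1)}$. *)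

From Stdlib Require Import Reals List.
Open Scope R_scope.

(* A real polynomial, as its coefficient sequence: rpoly p n = coeff of x^n. *)
Definition rpoly := nat -> R.

Definition monom (a : R) (e : nat) : rpoly :=
  fun n => if Nat.eq_dec n e then a else 0.

Fixpoint psum (n : nat) (g : nat -> rpoly) : rpoly :=
  match n with
  | O => fun _ => 0
  | S n' => fun k => psum n' g k + g n' k
  end.

Definition pmul (p q : rpoly) : rpoly :=
  fun n => sum_f_R0 (fun k => p k * q (n - k)%nat) n.

(* S_P(x) with the indeterminates a_ij specialised to the reals a i j:
   sum_{i<l} ( sum_{j<m} a_ij x^{p_ij} )^2.
   Matrices in N^{l x m} / R^{l x m} are functions nat -> nat -> _ of which
   only the entries i < l, j < m are used. *)
Definition S_P (l m : nat) (P : nat -> nat -> nat) (a : nat -> nat -> R) : rpoly :=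
  psum l (fun i =>
    let q := psum m (fun j => monom (a i j) (P i j)) in pmul q q).

Definition infinite_set (F : rpoly -> Prop) : Prop :=
  ~ (exists L : list rpoly, forall f, F f -> In f L).

From Stdlib Require Import Reals List Arith Lia Classical ClassicalEpsilon FunctionalExtensionality.
Open Scope R_scope.

(* The coefficient of x^n in S_P(a) is the sum of a_ij a_ij' over the triples
   (i, j, j') with p_ij + p_ij' = n.  Call the signature of a representation
   f = S_P(a) the data of which pairs of triples have equal exponent sums,
   together with the coefficient of f at the exponent sum of each triple; the
   latter lies in {0} u C, so there are finitely many signatures and infinitely
   many f in F share one.  If f0 = S_P0(a0) and f = S_P(a) have the same
   signature, then f = S_P(a0): the coefficient of x^n in S_P(a0), for n the
   exponent sum of a triple t, is a sum over exactly the triples occurring in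
   the coefficient of x^(P0-sum of t) in S_P0(a0), that is f0 at that exponent,
   which the signature identifies with f_n. *)

Fixpoint lsum {X} (g : X -> R) (L : list X) : R :=
  match L with nil => 0 | x :: L' => g x + lsum g L' end.

Lemma lsum_app {X} (g : X -> R) L1 L2 : lsum g (L1 ++ L2) = lsum g L1 + lsum g L2.
Proof. induction L1 as [|x L1 IH]; simpl; [ring | rewrite IH; ring]. Qed.

Lemma lsum_ext_in {X} (g h : X -> R) L :
  (forall x, In x L -> g x = h x) -> lsum g L = lsum h L.
Proof. induction L; simpl; intros H; auto. rewrite H, IHL; auto. Qed.

Lemma lsum_eq0 {X} (g : X -> R) L : (forall x, In x L -> g x = 0) -> lsum g L = 0.
Proof. induction L; simpl; intros H; auto. rewrite H, IHL; auto. ring. Qed.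

Lemma lsum_map {X Y} (g : Y -> R) (f : X -> Y) L :
  lsum g (map f L) = lsum (fun x => g (f x)) L.
Proof. induction L; simpl; auto. rewrite IHL; auto. Qed.

Lemma lsum_flat_map {X Y} (g : Y -> R) (f : X -> list Y) L :
  lsum g (flat_map f L) = lsum (fun x => lsum g (f x)) L.
Proof. induction L; simpl; auto. rewrite lsum_app, IHL; auto. Qed.

Lemma lsum_mulr {X} (g : X -> R) c L : c * lsum g L = lsum (fun x => c * g x) L.
Proof. induction L; simpl; [ring | rewrite <- IHL; ring]. Qed.

Lemma lsum_mull {X} (g : X -> R) c L : lsum g L * c = lsum (fun x => g x * c) L.
Proof. induction L; simpl; [ring | rewrite <- IHL; ring]. Qed.

Lemma lsum_add {X} (g h : X -> R) L : lsum g L + lsum h L = lsum (fun x => g x + h x) L.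
Proof. induction L; simpl; [ring | rewrite <- IHL; ring]. Qed.

Lemma psum_lsum n g : psum n g = fun k => lsum (fun i => g i k) (seq 0 n).
Proof.
  apply functional_extensionality; intro k.
  induction n; cbn [psum]; auto.
  rewrite seq_S, lsum_app, IHn. simpl. ring.
Qed.

Lemma sum_f_R0_lsum {X} n (L : list X) (g : nat -> X -> R) :
  sum_f_R0 (fun k => lsum (g k) L) n = lsum (fun x => sum_f_R0 (fun k => g k x) n) L.
Proof. induction n; simpl; auto. rewrite IHn, lsum_add. reflexivity. Qed.

Lemma sum_f_R0_delta n p (c : nat -> R) :
  sum_f_R0 (fun k => if Nat.eq_dec k p then c k else 0) n =
  if le_dec p n then c p else 0.
Proof.
  induction n; cbn [sum_f_R0].
  - destruct (Nat.eq_dec 0 p); destruct (le_dec p 0); subst; auto; lia.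
  - rewrite IHn.
    destruct (Nat.eq_dec (S n) p); destruct (le_dec p n); destruct (le_dec p (S n));
      subst; try lia; ring.
Qed.

Lemma pmul_lsum_monom {X Y} (L : list X) (L' : list Y) c p d q n :
  pmul (fun k => lsum (fun j => monom (c j) (p j) k) L)
       (fun k => lsum (fun j' => monom (d j') (q j') k) L') n
  = lsum (fun j => lsum (fun j' =>
      if Nat.eq_dec (p j + q j') n then c j * d j' else 0) L') L.
Proof.
  unfold pmul.
  transitivity (sum_f_R0 (fun k => lsum (fun j => lsum (fun j' =>
     if Nat.eq_dec k (p j) then c j * monom (d j') (q j') (n - k)%nat else 0) L') L) n).
  { apply sum_eq; intros k _. rewrite lsum_mull. apply lsum_ext_in; intros j _.
    rewrite lsum_mulr. apply lsum_ext_in; intros j' _. unfold monom.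
    destruct (Nat.eq_dec k (p j)); destruct (Nat.eq_dec (n - k)%nat (q j')); ring. }
  rewrite sum_f_R0_lsum. apply lsum_ext_in; intros j _.
  rewrite sum_f_R0_lsum. apply lsum_ext_in; intros j' _.
  rewrite (sum_f_R0_delta n (p j) (fun k => c j * monom (d j') (q j') (n - k)%nat)).
  unfold monom.
  destruct (le_dec (p j) n); destruct (Nat.eq_dec (p j + q j') n);
    try destruct (Nat.eq_dec (n - p j)%nat (q j')); try lia; ring.
Qed.

Definition index_triples (l m : nat) : list (nat * nat * nat) :=
  flat_map (fun i => flat_map (fun j => map (fun j' => (i, j, j')) (seq 0 m))
                              (seq 0 m)) (seq 0 l).

Definition triple_exp (P : nat -> nat -> nat) (t : nat * nat * nat) : nat :=
  let '(i, j, j') := t in (P i j + P i j')%nat.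

Definition triple_coef (a : nat -> nat -> R) (t : nat * nat * nat) : R :=
  let '(i, j, j') := t in a i j * a i j'.

Lemma S_P_coef l m P a n :
  S_P l m P a n = lsum (fun t =>
    if Nat.eq_dec (triple_exp P t) n then triple_coef a t else 0) (index_triples l m).
Proof.
  unfold S_P, index_triples. rewrite psum_lsum, lsum_flat_map.
  apply lsum_ext_in; intros i _. cbv beta zeta.
  rewrite psum_lsum, pmul_lsum_monom, lsum_flat_map.
  apply lsum_ext_in; intros j _. rewrite lsum_map. reflexivity.
Qed.

Lemma S_P_coef_eq0 l m P a n :
  (forall t, In t (index_triples l m) -> triple_exp P t <> n) -> S_P l m P a n = 0.
Proof.
  intros Hn. rewrite S_P_coef. apply lsum_eq0; intros t Ht.
  destruct (Nat.eq_dec (triple_exp P t) n); [exfalso; exact (Hn t Ht e) | reflexivity].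
Qed.

Lemma S_P_coef_reindex l m P P0 a n n0 :
  (forall t, In t (index_triples l m) -> triple_exp P t = n <-> triple_exp P0 t = n0) ->
  S_P l m P a n = S_P l m P0 a n0.
Proof.
  intros Hiff. rewrite !S_P_coef. apply lsum_ext_in; intros t Ht.
  specialize (Hiff t Ht).
  destruct (Nat.eq_dec (triple_exp P t) n); destruct (Nat.eq_dec (triple_exp P0 t) n0);
    tauto.
Qed.

Definition exp_pattern l m P : list bool :=
  map (fun tt => Nat.eqb (triple_exp P (fst tt)) (triple_exp P (snd tt)))
      (list_prod (index_triples l m) (index_triples l m)).

Definition coef_profile l m P (f : rpoly) : list R :=
  map (fun t => f (triple_exp P t)) (index_triples l m).

Definition signature l m P f : list bool * list R := (exp_pattern l m P, coef_profile l m P f).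

Lemma exp_pattern_eq_iff l m P P0 t t' :
  exp_pattern l m P = exp_pattern l m P0 ->
  In t (index_triples l m) -> In t' (index_triples l m) ->
  triple_exp P t' = triple_exp P t <-> triple_exp P0 t' = triple_exp P0 t.
Proof.
  intros HE Ht Ht'.
  pose proof (ext_in_map HE (t', t) (in_prod _ _ _ _ Ht' Ht)) as E; cbn [fst snd] in E.
  rewrite <- !Nat.eqb_eq, E. reflexivity.
Qed.

Lemma S_P_signature_transfer l m P a P0 a0 :
  signature l m P (S_P l m P a) = signature l m P0 (S_P l m P0 a0) ->
  S_P l m P a = S_P l m P a0.
Proof.
  intros Hsig. injection Hsig as HE HV.
  apply functional_extensionality; intro n.
  destruct (classic (exists t, In t (index_triples l m) /\ triple_exp P t = n))
    as [[t [Ht <-]] | Hout].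
  - rewrite (ext_in_map HV t Ht). symmetry.
    apply S_P_coef_reindex; intros t' Ht'. exact (exp_pattern_eq_iff _ _ _ _ _ _ HE Ht Ht').
  - rewrite !S_P_coef_eq0; auto; intros t Ht Htn; apply Hout; eauto.
Qed.

Fixpoint lists_over {A} (N : nat) (D : list A) : list (list A) :=
  match N with
  | O => nil :: nil
  | S N' => flat_map (fun s => map (fun d => d :: s) D) (lists_over N' D)
  end.

Lemma in_lists_over {A} N (D : list A) s :
  length s = N -> (forall x, In x s -> In x D) -> In s (lists_over N D).
Proof.
  intros <-. induction s as [|x s IH]; intros HD; simpl; [left; reflexivity|].
  apply in_flat_map. exists s. split.
  - apply IH. intros y Hy; apply HD; right; exact Hy.
  - apply (in_map (fun d => d :: s)). apply HD; left; reflexivity.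
Qed.

Definition signatures l m (C : list R) : list (list bool * list R) :=
  let T := index_triples l m in
  list_prod (lists_over (length (list_prod T T)) (true :: false :: nil))
            (lists_over (length T) (0 :: C)).

Lemma signature_in_signatures l m C P (f : rpoly) :
  (forall n, f n <> 0 -> In (f n) C) -> In (signature l m P f) (signatures l m C).
Proof.
  intros Hf. apply in_prod.
  - apply in_lists_over; [apply length_map | intros [|] _; simpl; auto].
  - apply in_lists_over; [apply length_map|]. intros r Hr. apply in_map_iff in Hr. destruct Hr as [t [<- _]].
    destruct (Req_dec (f (triple_exp P t)) 0); [left | right; apply Hf]; auto.
Qed.

Section Infinite.

Context {T : Type}.

Definition infinite (F : T -> Prop) : Prop := ~ exists L : list T, forall x, F x -> In x L.

Lemma infinite_pigeonhole {X} (A : list X) (Q : X -> T -> Prop) F :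
  infinite F -> (forall x, F x -> exists y, In y A /\ Q y x) ->
  exists y, infinite (fun x => F x /\ Q y x).
Proof.
  revert F; induction A as [|y A IH]; intros F HF Hcov.
  - exfalso. apply HF. exists nil. intros x Hx. destruct (Hcov x Hx) as [y [[] _]].
  - destruct (classic (infinite (fun x => F x /\ Q y x))) as [Hy | Hy]; [eauto|].
    apply NNPP in Hy. destruct Hy as [Ly HLy].
    destruct (IH (fun x => F x /\ ~ Q y x)) as [z Hz].
    + intros [L HL]. apply HF. exists (Ly ++ L). intros x Hx. apply in_or_app.
      destruct (classic (Q y x)); [left | right]; auto.
    + intros x [Hx Hnq]. destruct (Hcov x Hx) as [z [[<- | Hz] Hq]]; [contradiction | eauto].
    + exists z. intros [L HL]. apply Hz. exists L. intros x [[Hx _] Hq]. apply HL; auto.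
Qed.

Lemma infinite_injective_seq F :
  infinite F -> exists s : nat -> T, (forall k, F (s k)) /\ (forall k k', s k = s k' -> k = k').
Proof.
  intros HF.
  assert (Hexists_fresh : forall L : list T, exists x, F x /\ ~ In x L).
  { intros L. apply NNPP; intro Hno. apply HF. exists L. intros x Hx.
    apply NNPP; intro Hnin. apply Hno; eauto. }
  destruct (choice _ Hexists_fresh) as [fresh Hfresh_spec].
  (* [prefix k] is the list of the first k terms; term k is chosen outside it. *)
  set (prefix := nat_rect (fun _ => list T) nil (fun _ L => fresh L :: L)).
  assert (Hprefix : forall k j, (j < k)%nat -> In (fresh (prefix j)) (prefix k)).
  { induction k; intros j Hj; [lia|].
    destruct (Nat.eq_dec j k); [subst; left; reflexivity | right; apply IHk; lia]. }
  exists (fun k => fresh (prefix k)). split; [intro k; apply Hfresh_spec|].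
  intros k k' E. destruct (lt_eq_lt_dec k k') as [[Hlt | Heq] | Hgt]; auto; exfalso.
  - apply (proj2 (Hfresh_spec (prefix k'))). rewrite <- E. apply Hprefix; exact Hlt.
  - apply (proj2 (Hfresh_spec (prefix k))). rewrite E. apply Hprefix; exact Hgt.
Qed.

End Infinite.

Theorem lemma4p2 (l m : nat) (Hl : (0 < l)%nat) (Hm : (0 < m)%nat)
  (F : rpoly -> Prop) (C : list R)
  (HFinf : infinite_set F)
  (HFsos : forall f, F f ->
     exists (P : nat -> nat -> nat) (a : nat -> nat -> R), f = S_P l m P a)
  (HFcoef : forall f n, F f -> f n <> 0 -> In (f n) C) :
  exists (fs : nat -> rpoly) (Ps : nat -> nat -> nat -> nat) (abar : nat -> nat -> R),
    (forall k, F (fs k)) /\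
    (forall k k', fs k = fs k' -> k = k') /\
    (forall k, fs k = S_P l m (Ps k) abar).
Proof.
  set (represents x f := exists P a, f = S_P l m P a /\ signature l m P f = x).
  destruct (infinite_pigeonhole (signatures l m C) represents F HFinf) as [x Hx].
  { intros f Hf. destruct (HFsos f Hf) as [P [a Ha]].
    exists (signature l m P f). split; [apply signature_in_signatures; eauto | exists P, a; auto]. }
  destruct (infinite_injective_seq _ Hx) as [fs [Hfs Hinj]].
  destruct (Hfs 0%nat) as [_ [P0 [a0 [Hf0 Hx0]]]].
  assert (Hrep : forall k, exists P, fs k = S_P l m P a0).
  { intro k. destruct (Hfs k) as [_ [P [a [Hf Hxk]]]]. exists P.
    rewrite Hf in Hxk |- *. rewrite Hf0 in Hx0.
    apply (S_P_signature_transfer _ _ _ _ P0). congruence. }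
  destruct (choice _ Hrep) as [Ps HPs].
  exists fs, Ps, a0. split; [intro k; apply Hfs | split; assumption].
Qed.
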